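(* For any nonempty word $\mathfrak u\in\langle\Gamma\rangle$ and $\varepsilon\in\mathbb F_q^*$, $\Delta(\varphi_\varepsilon(\mathfrak u))=(\varphi_\varepsilon\otimes\mathrm{id})(\Delta(\mathfrak u))+(\mathrm{id}\otimes\varphi_\varepsilon-\varphi_\varepsilon\otimes\mathrm{id})(1\otimes\mathfrak u)$.
   Context: Let $q$ be a prime power. Let $\Gamma=\{x_{n,\varepsilon}\}_{n\in\mathbb N,\varepsilon\in\mathbb F_q^*}$ with weights $w(x_{n,\varepsilon})=n$, $\langle\Gamma\rangle$ the set of words over $\Gamma$ (empty word $1$, juxtaposition = concatenation, depth = number of letters, weight = sum of letter weights), $\mathfrak D$ the $\mathbb F_q$-vector space with basis $\langle\Gamma\rangle$; write $x_n:=x_{n,1}$. For positive integers $r,s,j$ put $\Delta^j_{r,s}=(-1)^{r-1}\binom{j-1}{r-1}+(-1)^{s-1}\binom{j-1}{s-1}$ if $(q-1)\mid j$ and $0$ otherwise. The bilinear products $\diamond,\sqcup\!\sqcup$ on $\mathfrak D$ are defined recursively by $1\diamond\mathfrak a=\mathfrak a\diamond1=\mathfrak a$, $1\sqcup\!\sqcup\mathfrak a=\mathfrak a\sqcup\!\sqcup1=\mathfrak a$ and, for nonempty $\mathfrak a=x_{a,\alpha}\mathfrak a_-$, $\mathfrak b=x_{b,\beta}\mathfrak b_-$: $\mathfrak a\diamond\mathfrak b=x_{a+b,\alpha\beta}(\mathfrak a_-\sqcup\!\sqcup\mathfrak b_-)+\sum_{i+j=a+b}\Delta^j_{a,b}x_{i,\alpha\beta}(x_j\sqcup\!\sqcup(\mathfrak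 a_-\sqcup\!\sqcup\mathfrak b_-))$, $\mathfrak a\sqcup\!\sqcup\mathfrak b=x_{a,\alpha}(\mathfrak a_-\sqcup\!\sqcup\mathfrak b)+x_{b,\beta}(\mathfrak a\sqcup\!\sqcup\mathfrak b_-)+\mathfrak a\diamond\mathfrak b$. For a word $\mathfrak a=x_{i_1}\cdots x_{i_m}$ with all characters $1$ put $[\mathfrak a]=(-1)^m\Delta^{i_1}_{1,w(\mathfrak a)+1}\cdots\Delta^{i_m}_{1,w(\mathfrak a)+1}x_{i_1}\sqcup\!\sqcup\cdots\sqcup\!\sqcup x_{i_m}$, $[1]=1$. The coproduct $\Delta:\mathfrak D\to\mathfrak D\otimes\mathfrak D$ is linear with $\Delta(1)=1\otimes1$, $\Delta(x_{n,\varepsilon})=1\otimes x_{n,\varepsilon}+\sum_{r\ge1,\ r+w(\mathfrak a)=n}\binom{r+\mathrm{depth}(\mathfrak a)-2}{\mathrm{depth}(\mathfrak a)}x_{r,\varepsilon}\otimes[\mathfrak a]$ (sum over words $\mathfrak a$ with all characters $1$), and for $\mathfrak u=x_{u,\varepsilon}\mathfrak v$ of depth $\ge2$, writing $\Delta(x_{u,\varepsilon})=1\otimes x_{u,\varepsilon}+\sum a\otimes b$ and $\Delta(\mathfrak v)=\sum a_{\mathfrak v}\otimes b_{\mathfrak v}$, $\Delta(\mathfrak u)=1\otimes\mathfrak u+\sum(a\,a_{\mathfrak v})\otimes(b\sqcup\!\sqcup b_{\mathfrak v})$. For $\varepsilon\in\mathbb F_q^*$ the horizontal map $\varphi_\varepsilon:\mathfrak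 D\to\mathfrak D$ is linear with $\varphi_\varepsilon(1)=1$ and $\varphi_\varepsilon(x_{u,\eta}\mathfrak u_-)=x_{u,\varepsilon\eta}\mathfrak u_-$. *)

From mathcomp Require Import all_boot all_algebra.
Set Implicit Arguments. Unset Strict Implicit. Unset Printing Implicit Defensive.
Import GRing.Theory.
Local Open Scope ring_scope.

Section Hopf.
Variable F : finFieldType.  (* F = F_q, q = #|F| *)

(* A letter x_{n,eps} is the pair (n, eps); words are sequences of letters,
   the empty word is [::] and juxtaposition is concatenation. *)
Definition letter := (nat * F)%type.
Definition word := seq letter.

(* Elements of the free F-vector space on a type K (K = word for D,
   K = word * word for D (x) D) are represented as finite formal linear
   combinations; two of them are equal iff all coefficients agree. *)
Definition lin (K : Type) := seq (F * K).
Definition coef (K : eqType) (x : lin K) (k : K) : F :=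
  \sum_(p <- x | p.2 == k) p.1.
Definition bind (K L : Type) (f : K -> lin L) (x : lin K) : lin L :=
  flatten [seq [seq (p.1 * r.1, r.2) | r <- f p.2] | p <- x].
Definition lmap (K L : Type) (f : K -> L) (x : lin K) : lin L :=
  [seq (p.1, f p.2) | p <- x].
Definition lscale (K : Type) (c : F) (x : lin K) : lin K :=
  [seq (c * p.1, p.2) | p <- x].
Definition prefix (l : letter) (x : lin word) : lin word := lmap (cons l) x.

Definition DeltaC (r s j : nat) : F :=
  if (#|F|.-1 %| j)%N then
    (-1) ^+ r.-1 * ('C(j.-1, r.-1))%:R + (-1) ^+ s.-1 * ('C(j.-1, s.-1))%:R
  else 0.

(* The shuffle product, defined by the mutual recursion of the paper
   (the diamond product is inlined); the fuel argument only ensures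
   termination and is always sufficient (sh below). *)
Fixpoint shF (n : nat) (a b : word) : lin word :=
  match n with
  | 0 => [::]
  | n'.+1 =>
    match a, b with
    | [::], _ => [:: (1, b)]
    | _, [::] => [:: (1, a)]
    | x :: a', y :: b' =>
      let: (ka, al) := x in let: (kb, be) := y in
      let T := shF n' a' b' in
      prefix x (shF n' a' b) ++ prefix y (shF n' a b') ++
      (* a <> b = x_{a+b,al be}(a_- sh b_-)
                  + sum_{i+j=a+b} Delta^j_{a,b} x_{i,al be}(x_j sh (a_- sh b_-)) *)
      prefix ((ka + kb)%N, al * be) T ++
      flatten [seq lscale (DeltaC ka kb j)
                 (prefix (((ka + kb) - j)%N, al * be)
                    (bind (shF n' [:: (j, 1)]) T))
              | j <- iota 1 (ka + kb).-1]
    end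
  end.

Definition sh (a b : word) : lin word := shF (size a + size b).+1 a b.

Fixpoint compsF (fuel m : nat) : seq (seq nat) :=
  match fuel with
  | 0 => if m == 0%N then [:: [::]] else [::]
  | f.+1 => if m == 0%N then [:: [::]] else
      flatten [seq map (cons k) (compsF f (m - k)) | k <- iota 1 m]
  end.
Definition comps (m : nat) : seq (seq nat) := compsF m m.

Definition word1 (c : seq nat) : word := [seq (i, 1) | i <- c].

Definition bracket (c : seq nat) : lin word :=
  lscale ((-1) ^+ size c * \prod_(i <- c) DeltaC 1 (sumn c).+1 i)
         (foldr (fun i acc => bind (sh [:: (i, 1)]) acc) [:: (1, [::])] c).

(* Delta(x_{n,eps}) - 1 (x) x_{n,eps} *)
Definition Dsum (x : letter) : lin (word * word) :=
  let: (n, e) := x in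
  flatten [seq lscale ('C(r + size c - 2, size c))%:R
                 (lmap (fun w => ([:: (r, e)], w)) (bracket c))
          | r <- iota 1 n, c <- comps (n - r)].

Definition D1 (x : letter) : lin (word * word) := (1, ([::], [:: x])) :: Dsum x.

Fixpoint cop (u : word) : lin (word * word) :=
  match u with
  | [::] => [:: (1, ([::], [::]))]
  | x :: v =>
    match v with
    | [::] => D1 x
    | _ => (1, ([::], u)) ::
        flatten [seq flatten [seq [seq (p.1 * p'.1 * r.1, (p.2.1 ++ p'.2.1, r.2))
                                    | r <- sh p.2.2 p'.2.2]
                             | p' <- cop v]
                | p <- Dsum x]
    end
  end.

Definition phiw (e : F) (u : word) : word :=
  match u with
  | [::] => [::]
  | (n, h) :: r => (n, e * h) :: r
  end.

Definition tmap (f g : word -> word) (x : lin (word * word)) : lin (word * word) :=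
  lmap (fun p => (f p.1, g p.2)) x.

End Hopf.

From mathcomp Require Import all_boot all_algebra.
From mathcomp Require Import ring.
Set Implicit Arguments. Unset Strict Implicit.
Import GRing.Theory.
Local Open Scope ring_scope.

(* Write a nonempty word as u = x_{n,h} v.  Its coproduct is 1 (x) u plus a
   remainder built from Delta(x_{n,h}) - 1 (x) x_{n,h} and Delta(v), and in
   Delta(x_{n,h}) - 1 (x) x_{n,h} the character h occurs only in the left
   factors x_{r,h}, which are single letters.  So phi_eps (x) id turns the
   remainder for x_{n,h} v into the remainder for x_{n,eps h} v; only the
   term 1 (x) u needs correcting. *)

Section Coproduct.
Variable F : finFieldType.

Lemma coef_nil (K : eqType) (k : K) : coef ([::] : lin F K) k = 0.
Proof. exact: big_nil. Qed.

Lemma coef_cat (K : eqType) (x y : lin F K) (k : K) :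
  coef (x ++ y) k = coef x k + coef y k.
Proof. by rewrite /coef big_cat. Qed.

Lemma coef_cons (K : eqType) (x : lin F K) (c : F) (a k : K) :
  coef ((c, a) :: x) k = (if a == k then c else 0) + coef x k.
Proof. by rewrite /coef big_cons /=; case: (a == k); rewrite ?add0r. Qed.

Lemma lmap_comp (K L M : Type) (f : K -> L) (g : L -> M) (x : lin F K) :
  lmap g (lmap f x) = lmap (g \o f) x.
Proof. by rewrite /lmap -map_comp. Qed.

Definition Dsum_skeleton (n : nat) : lin F (nat * word F) :=
  flatten [seq lscale ('C(r + size c - 2, size c))%:R
                 (lmap (fun w => (r, w)) (bracket F c))
          | r <- iota 1 n, c <- comps (n - r)].

Lemma DsumE (n : nat) (h : F) :
  Dsum (n, h) = lmap (fun q => ([:: (q.1, h)], q.2)) (Dsum_skeleton n).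
Proof.
rewrite /Dsum /Dsum_skeleton; elim: (iota 1 n) => //= r s IH.
rewrite !flatten_cat IH /lmap map_cat; congr cat.
elim: (comps (n - r)) => //= c t IHc.
by rewrite map_cat -IHc /lscale -!map_comp.
Qed.

Lemma tmap_phiw_Dsum (e : F) (n : nat) (h : F) :
  tmap (phiw e) id (Dsum (n, h)) = Dsum (n, e * h).
Proof. by rewrite /tmap !DsumE lmap_comp. Qed.

Definition cop_remainder (x : letter F) (v : word F) : lin F (word F * word F) :=
  if v is [::] then Dsum x else
  flatten [seq flatten [seq [seq (p.1 * p'.1 * r.1, (p.2.1 ++ p'.2.1, r.2))
                             | r <- sh p.2.2 p'.2.2]
                       | p' <- cop v]
          | p <- Dsum x].

Lemma cop_cons (x : letter F) (v : word F) :
  cop (x :: v) = (1, ([::], x :: v)) :: cop_remainder x v.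
Proof. by case: v. Qed.

Lemma tmap_phiw_cop_remainder (e : F) (n : nat) (h : F) (v : word F) :
  tmap (phiw e) id (cop_remainder (n, h) v) = cop_remainder (n, e * h) v.
Proof.
case: v => [|y v]; first exact: tmap_phiw_Dsum.
rewrite /cop_remainder !DsumE /tmap /lmap map_flatten -!map_comp; congr flatten.
apply: eq_map => q /=; rewrite map_flatten -map_comp; congr flatten.
by apply: eq_map => p' /=; rewrite -map_comp.
Qed.

End Coproduct.

Theorem proposition6p2 (F : finFieldType) (u : word F) (e : F) :
  u != [::] ->
  all (fun l : letter F => (0 < l.1)%N) u ->
  all (fun l : letter F => l.2 != 0) u ->
  e != 0 ->
  forall p : word F * word F,
    coef (cop (phiw e u)) p =
    coef (tmap (phiw e) id (cop u)
          ++ tmap id (phiw e) [:: (1, ([::], u))]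
          ++ lscale (-1) (tmap (phiw e) id [:: (1, ([::], u))])) p.
Proof.
case: u => [//|[n h] v] _ _ _ _ p.
rewrite [phiw e _]/= !cop_cons.
have -> : tmap (phiw e) id ((1, ([::], (n, h) :: v)) :: cop_remainder (n, h) v)
          = (1, ([::], (n, h) :: v)) :: cop_remainder (n, e * h) v.
  by rewrite -tmap_phiw_cop_remainder.
rewrite !coef_cat /tmap /lmap /lscale /= !coef_cons !coef_nil mulr1.
by case: ifP => _; case: ifP => _; ring.
Qed.
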